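(* Let $p, q \in \mathbb{R}$ with $q \le p$. Then $$\mathscr{E}_p(v) - \mathscr{E}_q(v) \le \frac{p-q}{8} (\max v - \min v)^2$$ for every $n \in \mathbb{N}$ and every $v \in \mathbb{R}^n$. Moreover, the constant $\frac{p-q}{8}$ is sharp: if $C \in \mathbb{R}$ is such that $\mathscr{E}_p(v) - \mathscr{E}_q(v) \le C(\max v - \min v)^2$ for all $n\in\mathbb{N}$ and all $v \in \mathbb{R}^n$, then $C \ge \frac{p-q}{8}$.
   Context: For $v = (v_1,\dots,v_n) \in \mathbb{R}^n$, the exponential mean of order $p \in \mathbb{R}$ is $\mathscr{E}_p(v) = \frac{1}{p}\ln\big(\frac{e^{p v_1} + \cdots + e^{p v_n}}{n}\big)$ for $p \neq 0$ and $\mathscr{E}_0(v) = \frac{v_1 + \cdots + v_n}{n}$. Here $\max v$ and $\min v$ denote the largest and smallest entry of $v$. *)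

(* concrete reals R. A vector v in R^n is a function
   v : nat -> R of which only the entries v 0, ..., v (n-1) are used. *)
From Stdlib Require Import Reals.
Open Scope R_scope.

Fixpoint sumn (n : nat) (f : nat -> R) : R :=
  match n with O => 0 | S k => sumn k f + f k end.

(* max and min of the entries v 0 .. v (n-1); meaningful for n >= 1 *)
Fixpoint vmax (n : nat) (v : nat -> R) : R :=
  match n with O => 0 | S O => v O | S k => Rmax (vmax k v) (v k) end.
Fixpoint vmin (n : nat) (v : nat -> R) : R :=
  match n with O => 0 | S O => v O | S k => Rmin (vmin k v) (v k) end.

Definition expmean (p : R) (n : nat) (v : nat -> R) : R :=
  if Req_EM_T p 0 then sumn n v / INR n
  else / p * ln (sumn n (fun i => exp (p * v i)) / INR n).

(* Let K(t) = ln((1/n) sum_i exp(t v_i)) be the cumulant generating function of the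
   entries of v. Then E_t = K(t)/t for t <> 0 and E_0 = K'(0): E_t is the slope of the
   chord of K from 0 to t. K'' is the variance of the entries under the weights
   exp(t v_i), hence at most (max v - min v)^2/4 by Popoviciu's inequality, so
   K(t) - b t^2 is concave for b = (max v - min v)^2/8; the chord slopes from 0 of a
   concave function decrease, i.e. E_p - b p <= E_q - b q.
   For sharpness take v = (-x, x): there K''(t) = x^2/cosh^2(tx) >= x^2 (1 - e^2)^2
   whenever |tx| <= e, so the same argument with convexity gives
   E_p - E_q >= (1 - e^2)^2 (p - q) x^2 / 2 while (max v - min v)^2 = 4 x^2;
   then let e -> 0. *)

From Stdlib Require Import Reals Lra Psatz.
From Coquelicot Require Import Coquelicot.
Open Scope R_scope.

Lemma sumn_ext n f g : (forall i, f i = g i) -> sumn n f = sumn n g.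
Proof. intros Hfg; induction n as [|n IH]; simpl; [reflexivity | rewrite IH, Hfg; reflexivity]. Qed.

Lemma sumn_lincomb n a b c f g h :
  sumn n (fun i => a * f i + b * g i + c * h i) = a * sumn n f + b * sumn n g + c * sumn n h.
Proof. induction n as [|n IH]; simpl; [ring | rewrite IH; ring]. Qed.

Lemma sumn_nonneg n f : (forall i, (i < n)%nat -> 0 <= f i) -> 0 <= sumn n f.
Proof.
  induction n as [|n IH]; intros Hf; simpl; [lra|].
  assert (0 <= sumn n f) by (apply IH; intros; apply Hf; lia).
  assert (0 <= f n) by (apply Hf; lia).
  lra.
Qed.

Lemma sumn_pos n f : (1 <= n)%nat -> (forall i, (i < n)%nat -> 0 < f i) -> 0 < sumn n f.
Proof.
  destruct n as [|n]; intros Hn Hf; [lia|]. simpl.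
  assert (0 <= sumn n f) by (apply sumn_nonneg; intros; apply Rlt_le, Hf; lia).
  assert (0 < f n) by (apply Hf; lia).
  lra.
Qed.

Lemma sumn_const n c : sumn n (fun _ => c) = INR n * c.
Proof. induction n as [|n IH]; simpl sumn; [simpl; ring | rewrite IH, S_INR; ring]. Qed.

Lemma vmin_le_entry_le_vmax n v i : (i < n)%nat -> vmin n v <= v i <= vmax n v.
Proof.
  revert i; induction n as [|n IH]; intros i Hi; [lia|].
  destruct n as [|n]; [replace i with 0%nat by lia; simpl; lra|].
  change (Rmin (vmin (S n) v) (v (S n)) <= v i <= Rmax (vmax (S n) v) (v (S n))).
  destruct (Nat.eq_dec i (S n)) as [->|Hne].
  - split; [apply Rmin_r | apply Rmax_r].
  - specialize (IH i ltac:(lia)).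
    pose proof (Rmin_l (vmin (S n) v) (v (S n))).
    pose proof (Rmax_l (vmax (S n) v) (v (S n))).
    lra.
Qed.

Lemma weighted_variance_le n (w v : nat -> R) m M :
  (forall i, (i < n)%nat -> 0 <= w i) -> (forall i, (i < n)%nat -> m <= v i <= M) ->
  sumn n (fun i => v i ^ 2 * w i) * sumn n w - sumn n (fun i => v i * w i) ^ 2
  <= (M - m) ^ 2 / 4 * sumn n w ^ 2.
Proof.
  intros Hw Hv.
  set (S0 := sumn n w); set (S1 := sumn n (fun i => v i * w i));
    set (S2 := sumn n (fun i => v i ^ 2 * w i)).
  assert (HS0 : 0 <= S0) by exact (sumn_nonneg n w Hw).
  assert (Hgap : 0 <= (M + m) * S1 + (-1) * S2 + (- (m * M)) * S0).
  { unfold S0, S1, S2; rewrite <- sumn_lincomb.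
    apply sumn_nonneg; intros i Hi.
    specialize (Hv i Hi); specialize (Hw i Hi).
    assert (0 <= (v i - m) * (M - v i)) by nra.
    nra. }
  pose proof (pow2_ge_0 (S1 - (M + m) / 2 * S0)).
  nra.
Qed.

Section MeanValue.

Variables (G G' : R -> R) (a c : R).
Hypothesis G_deriv : forall t, a <= t <= c -> is_derive G t (G' t).

Lemma mean_value_on x y : a <= x -> x < y -> y <= c ->
  exists z, x < z < y /\ G y - G x = G' z * (y - x).
Proof.
  intros Hax Hxy Hyc.
  destruct (MVT_cor2 G G' x y Hxy) as [z [Hz1 Hz2]].
  - intros t Ht; apply is_derive_Reals, G_deriv; lra.
  - exists z; split; assumption.
Qed.

Lemma antitone_of_derive_nonpos :
  (forall t, a <= t <= c -> G' t <= 0) -> forall x y, a <= x -> x <= y -> y <= c -> G y <= G x.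
Proof.
  intros Hneg x y Hax Hxy Hyc.
  destruct (Req_dec x y) as [<-|Hne]; [lra|].
  destruct (mean_value_on x y) as [z [Hz Hmvt]]; try lra.
  assert (G' z <= 0) by (apply Hneg; lra).
  nra.
Qed.

Hypothesis G'_antitone : forall x y, a <= x -> x <= y -> y <= c -> G' y <= G' x.

Lemma concave_le_tangent x y : a <= x <= c -> a <= y <= c -> G y <= G x + G' x * (y - x).
Proof.
  intros Hx Hy.
  destruct (Rtotal_order x y) as [Hxy|[<-|Hyx]]; [| lra |].
  - destruct (mean_value_on x y) as [z [Hz Hmvt]]; try lra.
    assert (G' z <= G' x) by (apply G'_antitone; lra).
    nra.
  - destruct (mean_value_on y x) as [z [Hz Hmvt]]; try lra.
    assert (G' x <= G' z) by (apply G'_antitone; lra).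
    nra.
Qed.

End MeanValue.

Definition slope0 (G G' : R -> R) (t : R) : R :=
  if Req_EM_T t 0 then G' 0 else G t / t.

Section ConcaveSlope0.

Variables (G G' : R -> R) (a c : R).
Hypotheses (G_deriv : forall t, a <= t <= c -> is_derive G t (G' t))
  (G'_antitone : forall x y, a <= x -> x <= y -> y <= c -> G' y <= G' x)
  (G0 : G 0 = 0) (H0 : a <= 0 <= c).

Let tangent := concave_le_tangent G G' a c G_deriv G'_antitone.

Lemma slope0_mul t : t <> 0 -> slope0 G G' t * t = G t.
Proof. intros Ht; unfold slope0; destruct (Req_EM_T t 0); [contradiction | field; exact Ht]. Qed.

Lemma slope0_le_deriv0 t : 0 <= t <= c -> slope0 G G' t <= G' 0.
Proof.
  intros Ht; destruct (Req_dec t 0) as [->|Ht0].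
  - unfold slope0; destruct (Req_EM_T 0 0); lra.
  - pose proof (tangent 0 t ltac:(lra) ltac:(lra)).
    pose proof (slope0_mul t Ht0).
    rewrite G0 in *; nra.
Qed.

Lemma deriv0_le_slope0 t : a <= t <= 0 -> G' 0 <= slope0 G G' t.
Proof.
  intros Ht; destruct (Req_dec t 0) as [->|Ht0].
  - unfold slope0; destruct (Req_EM_T 0 0); lra.
  - pose proof (tangent 0 t ltac:(lra) ltac:(lra)).
    pose proof (slope0_mul t Ht0).
    rewrite G0 in *; nra.
Qed.

(* Use the tangent at whichever of [q], [p] is nearer to [0],
   evaluated at [0] and at the other point. *)
Lemma slope0_antitone_same_sign q p :
  a <= q -> q <= p -> p <= c -> (0 < q \/ p < 0) -> slope0 G G' p <= slope0 G G' q.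
Proof.
  intros Haq Hqp Hpc Hsign.
  assert (Hcross : q * G p <= p * G q).
  { destruct Hsign as [Hq|Hp].
    - pose proof (tangent q 0 ltac:(lra) ltac:(lra)).
      pose proof (tangent q p ltac:(lra) ltac:(lra)).
      rewrite G0 in *; nra.
    - pose proof (tangent p 0 ltac:(lra) ltac:(lra)).
      pose proof (tangent p q ltac:(lra) ltac:(lra)).
      rewrite G0 in *; nra. }
  pose proof (slope0_mul p ltac:(lra)); pose proof (slope0_mul q ltac:(lra)).
  assert (0 < p * q) by nra.
  nra.
Qed.

Lemma slope0_antitone q p :
  a <= q -> q <= p -> p <= c -> slope0 G G' p <= slope0 G G' q.
Proof.
  intros Haq Hqp Hpc.
  destruct (Rlt_or_le 0 q) as [Hq|Hq]; [apply slope0_antitone_same_sign; auto|].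
  destruct (Rlt_or_le p 0) as [Hp|Hp]; [apply slope0_antitone_same_sign; auto|].
  pose proof (slope0_le_deriv0 p ltac:(lra)).
  pose proof (deriv0_le_slope0 q ltac:(lra)).
  lra.
Qed.

End ConcaveSlope0.

Lemma slope0_opp G G' t : slope0 (fun s => - G s) (fun s => - G' s) t = - slope0 G G' t.
Proof. unfold slope0; destruct (Req_EM_T t 0); [reflexivity | field; assumption]. Qed.

Lemma is_derive_sumn n (f : nat -> R -> R) f' t :
  (forall i, is_derive (f i) t (f' i)) ->
  is_derive (fun s => sumn n (fun i => f i s)) t (sumn n f').
Proof.
  intros Hf; induction n as [|n IH]; simpl.
  - apply is_derive_Reals, derivable_pt_lim_const.
  - exact (is_derive_plus _ _ _ _ _ IH (Hf n)).
Qed.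

Definition expsum n (v : nat -> R) k t := sumn n (fun i => v i ^ k * exp (t * v i)).

Lemma is_derive_expsum n v k t : is_derive (expsum n v k) t (expsum n v (S k) t).
Proof.
  apply (is_derive_sumn n (fun i s => v i ^ k * exp (s * v i))).
  intros i; auto_derive; [exact I | simpl; ring].
Qed.

Lemma Derive_expsum n v k t : Derive (fun s => expsum n v k s) t = expsum n v (S k) t.
Proof. apply is_derive_unique, is_derive_expsum. Qed.

Lemma expsum0_pos n v t : (1 <= n)%nat -> 0 < expsum n v 0 t.
Proof.
  intros Hn; apply sumn_pos; [exact Hn | intros i _; simpl; rewrite Rmult_1_l; apply exp_pos].
Qed.

Lemma expsum_at0 n v k : expsum n v k 0 = sumn n (fun i => v i ^ k).
Proof. apply sumn_ext; intros i; rewrite Rmult_0_l, exp_0; ring. Qed.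

(* [tilted_var n v t], the second derivative of [cgf n v], is the variance of the entries
   of [v] under the weights [exp (t * v i)]. *)
Definition cgf n v t := ln (expsum n v 0 t / INR n).
Definition cgf_deriv n v t := expsum n v 1 t / expsum n v 0 t.
Definition tilted_var n v t :=
  (expsum n v 2 t * expsum n v 0 t - expsum n v 1 t ^ 2) / expsum n v 0 t ^ 2.

Lemma is_derive_cgf n v t : (1 <= n)%nat -> is_derive (cgf n v) t (cgf_deriv n v t).
Proof.
  intros Hn; pose proof (expsum0_pos n v t Hn); pose proof (lt_0_INR n ltac:(lia)).
  unfold cgf, cgf_deriv; auto_derive.
  - split; [exists (expsum n v 1 t); apply is_derive_expsum |].
    split; [apply Rdiv_lt_0_compat; assumption | exact I].
  - rewrite Derive_expsum; field; lra.
Qed.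

Lemma is_derive_cgf_deriv n v t : (1 <= n)%nat -> is_derive (cgf_deriv n v) t (tilted_var n v t).
Proof.
  intros Hn; pose proof (expsum0_pos n v t Hn).
  unfold cgf_deriv, tilted_var; auto_derive.
  - split; [exists (expsum n v 2 t); apply is_derive_expsum |].
    split; [exists (expsum n v 1 t); apply is_derive_expsum | split; [lra | exact I]].
  - rewrite !Derive_expsum; field; lra.
Qed.

Lemma cgf0 n v : (1 <= n)%nat -> cgf n v 0 = 0.
Proof.
  intros Hn; pose proof (lt_0_INR n ltac:(lia)).
  unfold cgf; rewrite expsum_at0.
  rewrite (sumn_ext n _ (fun _ => 1)) by (intros; ring).
  rewrite sumn_const, Rmult_1_r, Rdiv_diag by lra.
  apply ln_1.
Qed.

Lemma expmean_sub_eq_slope0 n v b t : (1 <= n)%nat ->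
  expmean t n v - b * t
  = slope0 (fun s => cgf n v s - b * s ^ 2) (fun s => cgf_deriv n v s - 2 * b * s) t.
Proof.
  intros Hn; pose proof (lt_0_INR n ltac:(lia)).
  unfold expmean, slope0, cgf, cgf_deriv; destruct (Req_EM_T t 0) as [->|Ht].
  - rewrite !expsum_at0, (sumn_ext n (fun i => v i ^ 0) (fun _ => 1)),
      (sumn_ext n (fun i => v i ^ 1) v), sumn_const by (intros; ring).
    field; lra.
  - unfold expsum.
    rewrite (sumn_ext n (fun i => v i ^ 0 * exp (t * v i)) (fun i => exp (t * v i)))
      by (intros; ring).
    field; exact Ht.
Qed.

Lemma is_derive_cgf_sub_sq n v b t : (1 <= n)%nat ->
  is_derive (fun s => cgf n v s - b * s ^ 2) t (cgf_deriv n v t - 2 * b * t).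
Proof.
  intros Hn; apply (is_derive_minus (cgf n v) (fun s => b * s ^ 2)).
  - apply is_derive_cgf; exact Hn.
  - auto_derive; [exact I | ring].
Qed.

Lemma is_derive_cgf_deriv_sub_lin n v b t : (1 <= n)%nat ->
  is_derive (fun s => cgf_deriv n v s - 2 * b * s) t (tilted_var n v t - 2 * b).
Proof.
  intros Hn; apply (is_derive_minus (cgf_deriv n v) (fun s => 2 * b * s)).
  - apply is_derive_cgf_deriv; exact Hn.
  - auto_derive; [exact I | ring].
Qed.

Section ExpmeanMinusLinear.

Variables (n : nat) (v : nat -> R) (b a c : R).
Hypotheses (Hn : (1 <= n)%nat) (H0 : a <= 0 <= c).

Lemma expmean_sub_lin_antitone q p :
  (forall t, a <= t <= c -> tilted_var n v t <= 2 * b) -> a <= q -> q <= p -> p <= c ->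
  expmean p n v - b * p <= expmean q n v - b * q.
Proof.
  intros Hvar Haq Hqp Hpc; rewrite !(expmean_sub_eq_slope0 n v b) by exact Hn.
  apply (slope0_antitone _ _ a c); try assumption.
  - intros t _; apply is_derive_cgf_sub_sq, Hn.
  - apply (antitone_of_derive_nonpos _ (fun t => tilted_var n v t - 2 * b) a c).
    + intros t _; apply is_derive_cgf_deriv_sub_lin, Hn.
    + intros t Ht; specialize (Hvar t Ht); lra.
  - rewrite cgf0 by exact Hn; ring.
Qed.

Lemma expmean_sub_lin_monotone q p :
  (forall t, a <= t <= c -> 2 * b <= tilted_var n v t) -> a <= q -> q <= p -> p <= c ->
  expmean q n v - b * q <= expmean p n v - b * p.
Proof.
  intros Hvar Haq Hqp Hpc; rewrite !(expmean_sub_eq_slope0 n v b) by exact Hn.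
  apply Ropp_le_cancel; rewrite <- !slope0_opp.
  apply (slope0_antitone _ _ a c); try assumption.
  - intros t _; exact (is_derive_opp _ _ _ (is_derive_cgf_sub_sq n v b t Hn)).
  - apply (antitone_of_derive_nonpos _ (fun t => - (tilted_var n v t - 2 * b)) a c).
    + intros t _; exact (is_derive_opp _ _ _ (is_derive_cgf_deriv_sub_lin n v b t Hn)).
    + intros t Ht; specialize (Hvar t Ht); lra.
  - rewrite cgf0 by exact Hn; ring.
Qed.

End ExpmeanMinusLinear.

Lemma tilted_var_le n v t : (1 <= n)%nat -> tilted_var n v t <= (vmax n v - vmin n v) ^ 2 / 4.
Proof.
  intros Hn; pose proof (expsum0_pos n v t Hn).
  unfold tilted_var; apply Rle_div_l; [apply pow_lt; assumption|].
  unfold expsum.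
  rewrite (sumn_ext n (fun i => v i ^ 0 * _) (fun i => exp (t * v i))),
    (sumn_ext n (fun i => v i ^ 1 * _) (fun i => v i * exp (t * v i))) by (intros; ring).
  apply weighted_variance_le.
  - intros i _; apply Rlt_le, exp_pos.
  - intros i Hi; apply vmin_le_entry_le_vmax, Hi.
Qed.

Theorem expmean_sub_le p q n v : q <= p -> (1 <= n)%nat ->
  expmean p n v - expmean q n v <= (p - q) / 8 * (vmax n v - vmin n v) ^ 2.
Proof.
  intros Hqp Hn; set (b := (vmax n v - vmin n v) ^ 2 / 8).
  assert (Hmono : expmean p n v - b * p <= expmean q n v - b * q).
  { apply (expmean_sub_lin_antitone n v b (Rmin q 0) (Rmax p 0)); try assumption.
    - split; [apply Rmin_r | apply Rmax_r].
    - intros t _; unfold b; pose proof (tilted_var_le n v t Hn); lra.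
    - apply Rmin_l.
    - apply Rmax_l. }
  unfold b in Hmono; lra.
Qed.

Definition pm_vec (x : R) : nat -> R := fun i => if Nat.eqb i 0 then - x else x.

Lemma exp_add_exp_opp_mul_le y : y ^ 2 <= 1 -> (exp y + exp (- y)) * (1 - y ^ 2) <= 2.
Proof.
  intros Hy.
  assert (Hinv : exp y * exp (- y) = 1) by (rewrite <- exp_plus, Rplus_opp_r; apply exp_0).
  pose proof (exp_ineq1_le y); pose proof (exp_ineq1_le (- y)).
  pose proof (exp_pos y); pose proof (exp_pos (- y)).
  assert (1 - y >= 0 /\ 1 + y >= 0) by nra.
  assert (exp y * (1 - y) <= 1) by nra.
  assert (exp (- y) * (1 + y) <= 1) by nra.
  nra.
Qed.

Lemma tilted_var_pm_vec x t :
  tilted_var 2 (pm_vec x) t = 4 * x ^ 2 / (exp (t * x) + exp (- (t * x))) ^ 2.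
Proof.
  assert (Hinv : exp (t * x) * exp (- (t * x)) = 1)
    by (rewrite <- exp_plus, Rplus_opp_r; apply exp_0).
  pose proof (exp_pos (t * x)); pose proof (exp_pos (- (t * x))).
  rewrite <- (Rmult_1_r (4 * x ^ 2)), <- Hinv.
  unfold tilted_var, expsum, pm_vec; simpl.
  replace (t * - x) with (- (t * x)) by ring.
  field; lra.
Qed.

Lemma tilted_var_pm_vec_ge x t e : (t * x) ^ 2 <= e ^ 2 -> e ^ 2 <= 1 ->
  x ^ 2 * (1 - e ^ 2) ^ 2 <= tilted_var 2 (pm_vec x) t.
Proof.
  intros Htx He; rewrite tilted_var_pm_vec.
  set (E := exp (t * x) + exp (- (t * x))).
  assert (HE : 0 < E)
    by (pose proof (exp_pos (t * x)); pose proof (exp_pos (- (t * x))); unfold E; lra).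
  assert (Hcosh : E * (1 - (t * x) ^ 2) <= 2) by (apply exp_add_exp_opp_mul_le; lra).
  assert (HEe : 0 <= E * (1 - e ^ 2) <= 2) by nra.
  apply (Rle_div_r _ _ (E ^ 2)); [apply pow_lt; exact HE|].
  replace (x ^ 2 * (1 - e ^ 2) ^ 2 * E ^ 2) with (x ^ 2 * (E * (1 - e ^ 2)) ^ 2) by ring.
  assert (Hsq : (E * (1 - e ^ 2)) ^ 2 <= 2 ^ 2) by (apply pow_incr; exact HEe).
  apply Rmult_le_compat_l with (r := x ^ 2) in Hsq; [lra | apply pow2_ge_0].
Qed.

Lemma le_of_forall_one_sub_sq_sq_mul_le k C :
  (forall e, 0 < e < 1 -> (1 - e ^ 2) ^ 2 * k <= C) -> k <= C.
Proof.
  intros Hk; destruct (Rle_or_lt k C) as [|HCk]; [assumption | exfalso].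
  destruct (Rle_or_lt k 0) as [Hk0|Hk0].
  - specialize (Hk (1 / 2) ltac:(lra)).
    replace ((1 - (1 / 2) ^ 2) ^ 2) with (9 / 16) in Hk by field.
    lra.
  - set (d := k - C); set (e := d / (2 * (d + k))).
    assert (Hed : e * (2 * (d + k)) = d) by (unfold e, d; field; lra).
    assert (He : 0 < e < 1) by (unfold d in Hed; split; nra).
    specialize (Hk e He).
    assert (0 <= e ^ 4 * k) by (apply Rmult_le_pos; [apply pow_le|]; lra).
    assert (0 <= e * (1 - e) * k) by (apply Rmult_le_pos; [apply Rmult_le_pos|]; lra).
    unfold d in Hed; nra.
Qed.

Lemma vmax_sub_vmin_pm_vec x : 0 <= x -> vmax 2 (pm_vec x) - vmin 2 (pm_vec x) = 2 * x.
Proof.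
  intros Hx; unfold pm_vec; simpl.
  rewrite Rmax_right, Rmin_left by lra; ring.
Qed.

Theorem expmean_sub_const_sharp p q C : q <= p ->
  (forall n v, (1 <= n)%nat ->
     expmean p n v - expmean q n v <= C * (vmax n v - vmin n v) ^ 2) ->
  C >= (p - q) / 8.
Proof.
  intros Hqp HC; apply Rle_ge, le_of_forall_one_sub_sq_sq_mul_le; intros e He.
  set (r := Rabs p + Rabs q + 1); set (x := e / r).
  pose proof (Rle_abs p); pose proof (Rabs_maj2 q).
  pose proof (Rabs_pos p); pose proof (Rabs_pos q).
  assert (Hx : 0 < x) by (unfold x, r; apply Rdiv_lt_0_compat; lra).
  assert (Hrx : r * x = e) by (unfold x, r; field; lra).
  set (b := x ^ 2 * (1 - e ^ 2) ^ 2 / 2).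
  assert (Hmono : expmean q 2 (pm_vec x) - b * q <= expmean p 2 (pm_vec x) - b * p).
  { apply (expmean_sub_lin_monotone 2 (pm_vec x) b (- r) r); try lia; try (unfold r; lra).
    intros t Ht; unfold b.
    replace (2 * (x ^ 2 * (1 - e ^ 2) ^ 2 / 2)) with (x ^ 2 * (1 - e ^ 2) ^ 2) by field.
    apply tilted_var_pm_vec_ge; [| nra].
    rewrite <- Hrx; assert (t ^ 2 <= r ^ 2) by nra; nra. }
  specialize (HC 2%nat (pm_vec x) ltac:(lia)).
  rewrite vmax_sub_vmin_pm_vec in HC by lra.
  unfold b in Hmono.
  apply (Rmult_le_reg_l (x ^ 2)); [apply pow_lt, Hx | nra].
Qed.

Theorem mainTheorem5 (p q : R) (hqp : q <= p) :
  (forall (n : nat) (v : nat -> R), (1 <= n)%nat ->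
     expmean p n v - expmean q n v <= (p - q) / 8 * (vmax n v - vmin n v) ^ 2)
  /\
  (forall C : R,
     (forall (n : nat) (v : nat -> R), (1 <= n)%nat ->
        expmean p n v - expmean q n v <= C * (vmax n v - vmin n v) ^ 2) ->
     C >= (p - q) / 8).
Proof.
  split.
  - intros n v Hn; exact (expmean_sub_le p q n v hqp Hn).
  - intros C HC; exact (expmean_sub_const_sharp p q C hqp HC).
Qed.
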